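(* Let $G$ be a word hyperbolic group and $0\to\mathbb Z\xrightarrow{\iota}E\xrightarrow{\pi}G\to1$ a central extension, $X$ a finite set mapping onto a symmetric generating set of $E$ (evaluation $w\mapsto\overline w\in E$). Let $C>0$ be an integer such that for every $g\in G$ the maximum $\rho(g):=\max\{\overline w\,\iota(-C\,\mathrm{len}(w)): w\in X^*,\ \pi(\overline w)=g\}$ exists in the ordered fibre $\pi^{-1}(g)$, and such that for some $\lambda>0$ every word achieving this maximum is a $(\lambda,0)$-quasigeodesic in the Cayley graph of $G$ with respect to $\pi(\overline X)$. Let $0\to\mathbb Q\xrightarrow{\iota_{\mathbb Q}}E_{\mathbb Q}\to G\to1$ be the pushout of the extension along $\mathbb Z\subset\mathbb Q$, and define $q:G\to E_{\mathbb Q}$ by $q(g)=\tfrac12\big(\rho(g)+\rho(g^{-1})^{-1}\big)$. Then the cocycle determined by $q$ is bounded: there is a constant $M$ such that the rational number $\tau(g,h)$ defined by $\iota_{\mathbb Q}(\tau(g,h))=q(gh)^{-1}q(g)q(h)$ satisfies $|\tau(g,h)|\le M$ for all $g,h\in G$.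
   Context: Order on a fibre: $h_1\le h_2$ iff $h_2h_1^{-1}=\iota(n)$ with $n\ge0$. $E_{\mathbb Q}=(E\times\mathbb Q)/\{(\iota(n),-n):n\in\mathbb Z\}$, a central extension of $G$ by $\mathbb Q$ containing $E$. For $h_1,h_2$ in the same fibre of $E_{\mathbb Q}\to G$, their average $\tfrac12(h_1+h_2)$ is $h_2\,\iota_{\mathbb Q}(r/2)$ where $\iota_{\mathbb Q}(r)=h_1h_2^{-1}$; note $\rho(g)$ and $\rho(g^{-1})^{-1}$ lie in the same fibre. *)

From HB Require Import structures.
From mathcomp Require Import all_boot all_order all_algebra.

Set Implicit Arguments.
Unset Strict Implicit.
Unset Printing Implicit Defensive.

Import Order.TTheory GRing.Theory Num.Theory.

Local Open Scope group_scope.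

Definition word_eval (A : Type) (H : groupType) (ev : A -> H) (w : seq A) : H :=
  \prod_(a <- w) ev a.

Definition word_length (H : groupType) (S : seq H) (g : H) (n : nat) : Prop :=
  (exists w : seq H, all (fun s => s \in S) w /\ size w = n /\ \prod_(s <- w) s = g)
  /\ (forall w : seq H, all (fun s => s \in S) w -> \prod_(s <- w) s = g -> (n <= size w)%N).

Definition cayley_dist (H : groupType) (S : seq H) (a b : H) (n : nat) : Prop :=
  word_length S (a^-1 * b) n.

Definition fin_sym_gen (H : groupType) (S : seq H) : Prop :=
  (forall s, s \in S -> s^-1 \in S) /\
  (forall g : H, exists w : seq H, all (fun s => s \in S) w /\ \prod_(s <- w) s = g).

Definition four_point (H : groupType) (S : seq H) (delta : nat) : Prop :=
  forall x y z u : H, forall dxy dzu dxz dyu dxu dyz : nat,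
    cayley_dist S x y dxy -> cayley_dist S z u dzu ->
    cayley_dist S x z dxz -> cayley_dist S y u dyu ->
    cayley_dist S x u dxu -> cayley_dist S y z dyz ->
    (dxy + dzu <= maxn (dxz + dyu) (dxu + dyz) + 2 * delta)%N.

Definition word_hyperbolic (H : groupType) : Prop :=
  exists S : seq H, fin_sym_gen S /\ exists delta : nat, four_point S delta.

Definition central_extension (E G : groupType) (iota : int -> E) (pi : E -> G) : Prop :=
  (forall a b : int, iota (a + b)%R = iota a * iota b) /\
  injective iota /\
  (forall (n : int) (e : E), iota n * e = e * iota n) /\
  (forall e f : E, pi (e * f) = pi e * pi f) /\
  (forall g : G, exists e : E, pi e = g) /\
  (forall e : E, pi e = 1 <-> exists n : int, e = iota n).

Definition fibre_le (E : groupType) (iota : int -> E) (h1 h2 : E) : Prop :=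
  exists n : int, (0 <= n)%R /\ h2 * h1^-1 = iota n.

(* The rationalised extension E_Q = (E x Q) / {(iota n, -n)}           *)
(* represented by pairs, with the quotient relation [EQ_eq]            *)

Definition EQ_mul (E : groupType) (a b : E * rat) : E * rat :=
  (a.1 * b.1, (a.2 + b.2)%R).
Definition EQ_inv (E : groupType) (a : E * rat) : E * rat := (a.1^-1, (- a.2)%R).
Definition EQ_eq (E : groupType) (iota : int -> E) (a b : E * rat) : Prop :=
  exists n : int, a.1^-1 * b.1 = iota n /\ (b.2 - a.2)%R = (- n%:~R)%R.
Definition iotaQ (E : groupType) (r : rat) : E * rat := (1, r).
Definition EinEQ (E : groupType) (e : E) : E * rat := (e, 0%R).

(* [a] is (a representative of) the average 1/2 (h1 + h2) of h1, h2 in the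
   same fibre of E_Q -> G: a = h2 iota_Q(r/2) where iota_Q(r) = h1 h2^-1. *)
Definition EQ_average (E : groupType) (iota : int -> E) (h1 h2 a : E * rat) : Prop :=
  exists r : rat, EQ_eq iota (iotaQ E r) (EQ_mul h1 (EQ_inv h2)) /\
                  EQ_eq iota a (EQ_mul h2 (iotaQ E (r / 2)%R)).

Definition weighted (X : Type) (E : groupType) (ev : X -> E) (iota : int -> E)
    (C : nat) (w : seq X) : E :=
  word_eval ev w * iota (- (C * size w)%N%:Z)%R.

Definition is_rho (X : Type) (E G : groupType) (ev : X -> E) (iota : int -> E)
    (pi : E -> G) (C : nat) (g : G) (rg : E) : Prop :=
  (exists w : seq X, pi (word_eval ev w) = g /\ weighted ev iota C w = rg) /\
  (forall w : seq X, pi (word_eval ev w) = g -> fibre_le iota (weighted ev iota C w) rg).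

Definition quasigeodesic (X : finType) (E G : groupType) (ev : X -> E)
    (pi : E -> G) (lambda : rat) (w : seq X) : Prop :=
  forall i j : nat, (i <= j)%N -> (j <= size w)%N ->
  forall d : nat,
    cayley_dist [seq pi (ev x) | x <- enum X]
      (pi (word_eval ev (take i w))) (pi (word_eval ev (take j w))) d ->
    ((j - i)%:R <= lambda * d%:R)%R /\ (d%:R <= lambda * (j - i)%:R)%R.

(* The maximizing words defining [rho] make [rho] a section of [pi] whose
   defect [rho (x y) = rho x rho y iota (c x y)] is a nonnegative normalized
   2-cocycle [c], and the cocycle of [q] is [(c (h^-1, g^-1) - c (g, h)) / 2].
   Cutting a maximizing word for [g] into a prefix and a suffix splits
   [g = a b] with [c (a, b) = 0], and by the Morse lemma the path of such a
   word stays uniformly close to every geodesic from [1] to [g].  Cutting the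
   three sides of a thin geodesic triangle [1, g, g h] near its inner points,
   the cocycle identity bounds [c (h^-1, g^-1)] by [c (g, h)] plus three
   values [c (s, s^-1)] with [s] in a fixed ball, and these are bounded since
   [s |-> c (s, s^-1)] is subadditive.  Exchanging the roles of [(g, h)] and
   [(h^-1, g^-1)] bounds [|tau|]. *)

From HB Require Import structures.
From mathcomp Require Import all_boot all_order all_algebra zify.
From mathcomp.algebra_tactics Require Import lra.
From Stdlib Require Import Wf_nat ClassicalEpsilon.

Set Implicit Arguments.
Unset Strict Implicit.
Unset Printing Implicit Defensive.

Import Order.TTheory GRing.Theory Num.Theory.

Lemma nat_argmin (h : nat -> nat) n :
  exists i, i <= n /\ forall j, j <= n -> h i <= h j.
Proof.
elim: n => [|n [i [hi hmin]]]; first by exists 0; split=> // j; rewrite leqn0 => /eqP->.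
have hle j : j <= n.+1 -> j = n.+1 \/ j <= n by lia.
case: (leqP (h i) (h n.+1)) => c.
  by exists i; split=> [|j /hle [->|/hmin]] //; lia.
by exists n.+1; split=> // j /hle [->|/hmin]; lia.
Qed.

Lemma nat_argmax (h : nat -> nat) n :
  exists i, i <= n /\ forall j, j <= n -> h j <= h i.
Proof.
elim: n => [|n [i [hi hmax]]]; first by exists 0; split=> // j; rewrite leqn0 => /eqP->.
have hle j : j <= n.+1 -> j = n.+1 \/ j <= n by lia.
case: (leqP (h n.+1) (h i)) => c.
  by exists i; split=> [|j /hle [->|/hmax]] //; lia.
by exists n.+1; split=> // j /hle [->|/hmax]; lia.
Qed.

Lemma pow2_bracket m : exists k, m <= 2 ^ k <= m.*2.+1.
Proof.
elim: m => [|m [k /andP [h1 h2]]]; first by exists 0.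
case: (ltnP m (2 ^ k)) => c; first by exists k; apply/andP; lia.
by exists k.+1; rewrite expnS; apply/andP; lia.
Qed.

Lemma sq_le_pow2 k : k * k <= 2 ^ k + 16.
Proof.
suff big : forall m, 4 <= m -> m * m <= 2 ^ m.
  case: (leqP 4 k) => hk; first by have := big k hk; lia.
  by case: k hk => [|[|[|[|]]]].
elim=> [//|m IH] hm.
case: (ltngtP m 4) => c.
- by case: m c hm IH => [|[|[|[|]]]].
- by have := IH (ltnW c); rewrite expnS; nia.
- by rewrite c.
Qed.

Lemma sq_le_linear k a b : k * k <= a * k + b -> k <= a + b.
Proof. by move=> h; case: (leqP k (a + b)) => // c; nia. Qed.

Lemma linear_log_bound D k a b c :
  D <= a + b * k -> 2 ^ k <= c * D + 1 -> D <= a + b * (c * (a + b) + 17).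
Proof.
move=> hD hk.
have : k <= c * b + (c * a + 17).
  apply: sq_le_linear; have := sq_le_pow2 k; have := leq_mul (leqnn c) hD; nia.
by move/(leq_mul (leqnn b)); lia.
Qed.

Section HyperbolicMetric.

Variables (T : Type) (d : T -> T -> nat) (delta : nat).
Hypothesis d_refl : forall x, d x x = 0.
Hypothesis d_sym : forall x y, d x y = d y x.
Hypothesis d_triangle : forall x y z, d x z <= d x y + d y z.
Hypothesis d_four_point : forall x y z u,
  d x y + d z u <= maxn (d x z + d y u) (d x u + d y z) + 2 * delta.

(* Twice the Gromov product (x|y)_w, so that it stays a natural number. *)
Definition gromov2 (x y w : T) := d w x + d w y - d x y.

Definition geodesic (g : nat -> T) (x y : T) :=
  [/\ g 0 = x, g (d x y) = y &
      forall i j, i <= j -> j <= d x y -> d (g i) (g j) = j - i].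

Lemma gromov2C x y w : gromov2 x y w = gromov2 y x w.
Proof. by rewrite /gromov2 (d_sym x y) addnC. Qed.

Lemma gromov2_min x y z w A :
  A <= gromov2 x y w -> A <= gromov2 y z w -> A <= gromov2 x z w + 2 * delta.
Proof.
rewrite /gromov2 => h1 h2.
have := d_four_point x z y w; have := d_triangle x w y; have := d_triangle y w z.
have := d_triangle x w z; have := d_sym w x; have := d_sym w y; have := d_sym w z.
have := d_sym z y; have := d_sym y x; have := d_sym x z.
lia.
Qed.

Lemma gromov2_min3 x y z u w A :
  A <= gromov2 x y w -> A <= gromov2 y z w -> A <= gromov2 z u w ->
  A <= gromov2 x u w + 4 * delta.
Proof.
move=> h1 h2 h3; have h12 := gromov2_min h1 h2.
have := @gromov2_min x z u w (A - 2 * delta); lia.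
Qed.

(* The dyadic subdivision argument: each halving of the path costs [2 delta]. *)
Lemma far_path_gromov2 (x : nat -> T) w L D k u m :
  m <= 2 ^ k ->
  (forall i, u <= i -> i < u + m -> d (x i) (x i.+1) <= L) ->
  (forall i, u <= i -> i <= u + m -> D <= d w (x i)) ->
  2 * D <= gromov2 (x u) (x (u + m)) w + 2 * L + 2 * delta * k.
Proof.
elim: k u m => [|k IH] u m hm step far.
  rewrite /gromov2; case: m hm step far => [|[|//]] _ step far.
    by rewrite addn0 d_refl; have := far u (leqnn u) (leq_addr 0 u); lia.
  rewrite addn1; have := step u (leqnn u) ltac:(lia).
  by have := far u (leqnn u) ltac:(lia); have := far u.+1 ltac:(lia) ltac:(lia); lia.
rewrite expnS in hm.
case: (leqP m (2 ^ k)) => hmk; first by have := IH u m hmk step far; lia.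
have h1 := IH u (2 ^ k) (leqnn _)
  (fun i hu hi => step i hu ltac:(lia)) (fun i hu hi => far i hu ltac:(lia)).
have h2 := IH (u + 2 ^ k) (m - 2 ^ k) ltac:(lia)
  (fun i hu hi => step i ltac:(lia) ltac:(lia)) (fun i hu hi => far i ltac:(lia) ltac:(lia)).
rewrite -[u + 2 ^ k + _]addnA subnKC in h2; last by lia.
have := @gromov2_min (x u) (x (u + 2 ^ k)) (x (u + m)) w
  (2 * D - (2 * L + 2 * delta * k)) ltac:(lia) ltac:(lia).
by rewrite mulnS; lia.
Qed.

Lemma geodesic_rev g x y : geodesic g x y -> geodesic (fun j => g (d x y - j)) y x.
Proof.
move=> [g0 gN gd]; rewrite /geodesic (d_sym y x) subn0 subnn; split=> // i j hij hj.
by rewrite d_sym gd; lia.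
Qed.

Lemma geodesic_dist_start g x y i : geodesic g x y -> i <= d x y -> d x (g i) = i.
Proof. by move=> [g0 _ gd] hi; rewrite -[in LHS]g0 gd ?subn0. Qed.

Lemma geodesic_dist_end g x y i : geodesic g x y -> i <= d x y -> d (g i) y = d x y - i.
Proof. by move=> [_ gN gd] hi; rewrite -[in LHS]gN gd. Qed.

Lemma far_geodesic_gromov2 g y z w D k :
  geodesic g y z -> D + d y z <= d w y -> d y z <= 2 ^ k ->
  2 * D <= gromov2 y z w + 2 + 2 * delta * k.
Proof.
move=> hg far hk; have [g0 gN gd] := hg.
have := @far_path_gromov2 g w 1 D k 0 (d y z) hk; rewrite add0n g0 gN; apply.
  by move=> i _ hi; rewrite gd //; lia.
move=> i _ hi; have := d_triangle w (g i) y.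
by rewrite (d_sym (g i)) (geodesic_dist_start hg hi); lia.
Qed.

Lemma geodesic_tripod al be x y z j :
  geodesic al x y -> geodesic be x z -> j <= d x y -> j <= d x z ->
  2 * j <= gromov2 y z x + 1 -> d (al j) (be j) <= 4 * delta + 1.
Proof.
move=> ha hb hy hz; rewrite /gromov2 => hj.
have := d_triangle (al j) x (be j); rewrite (d_sym (al j) x).
have := @gromov2_min3 (al j) y z (be j) x (2 * j - 1).
rewrite /gromov2 !(geodesic_dist_start ha hy) !(geodesic_dist_start hb hz).
rewrite (d_sym z) (geodesic_dist_end hb hz) (geodesic_dist_end ha hy); lia.
Qed.

Lemma geodesic_triangle_thin g1 g2 g3 x y z :
  geodesic g1 x y -> geodesic g2 y z -> geodesic g3 z x ->
  exists j1 j2 j3, [/\ j1 <= d x y, j2 <= d y z, j3 <= d z x,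
    d (g1 j1) (g2 j2) <= 4 * delta + 1 & d (g3 j3) (g1 j1) <= 4 * delta + 1].
Proof.
move=> h1 h2 h3.
set i := (d x y + d z x - d y z)./2.
have hi := odd_double_half (d x y + d z x - d y z); rewrite -/i -muln2 in hi.
have hb := leq_b1 (odd (d x y + d z x - d y z)).
have := d_triangle x z y; have := d_triangle y x z; have := d_triangle z y x.
rewrite (d_sym y x) (d_sym z y) (d_sym x z) => t1 t2 t3.
have Tx := @geodesic_tripod _ _ x y z i h1 (geodesic_rev h3).
have Ty := @geodesic_tripod _ _ y x z (d x y - i) (geodesic_rev h1) h2.
move: Tx Ty; rewrite /= /gromov2 !(d_sym y x) !(d_sym x z) subKn; last by lia.
move=> Tx Ty; exists i, (d x y - i), (d z x - i).
by split; try lia; rewrite d_sym; lia.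
Qed.

Hypothesis d_geodesic : forall x y, exists g, geodesic g x y.

Lemma geodesic_anchor_before (p : nat -> T) n g j0 D :
  geodesic g (p 0) (p n) -> j0 <= d (p 0) (p n) ->
  (forall i, i <= n -> D <= d (g j0) (p i)) ->
  (forall j, j <= d (p 0) (p n) -> exists2 i, i <= n & d (g j) (p i) <= D) ->
  exists j1 a, [/\ j1 <= j0, a <= n & D + d (g j1) (p a) <= j0 - j1 <= 2 * D].
Proof.
move=> hg hj0 far near; case: (leqP (2 * D) j0) => h.
  have [a ha da] := near (j0 - 2 * D) ltac:(lia).
  by exists (j0 - 2 * D), a; split; lia.
have [g0 _ _] := hg; exists 0, 0; rewrite g0 d_refl.
by have := far 0 (leq0n n); rewrite d_sym (geodesic_dist_start hg hj0); split; lia.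
Qed.

Lemma geodesic_anchor_after (p : nat -> T) n g j0 D :
  geodesic g (p 0) (p n) -> j0 <= d (p 0) (p n) ->
  (forall i, i <= n -> D <= d (g j0) (p i)) ->
  (forall j, j <= d (p 0) (p n) -> exists2 i, i <= n & d (g j) (p i) <= D) ->
  exists j2 b, [/\ j0 <= j2 <= d (p 0) (p n), b <= n &
                   D + d (g j2) (p b) <= j2 - j0 <= 2 * D].
Proof.
move=> hg hj0 far near; case: (leqP (j0 + 2 * D) (d (p 0) (p n))) => h.
  have [b hb db] := near (j0 + 2 * D) h.
  by exists (j0 + 2 * D), b; split; lia.
have [_ gN _] := hg; exists (d (p 0) (p n)), n; rewrite gN d_refl.
by have := far n (leqnn n); rewrite (geodesic_dist_end hg hj0); split; lia.
Qed.

Section MorsePath.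

Variables (L mu : nat) (p : nat -> T) (n : nat).
Hypothesis L_gt0 : 0 < L.
Hypothesis p_step : forall i, i < n -> d (p i) (p i.+1) <= L.
Hypothesis p_quasi : forall i j, i <= j -> j <= n -> j - i <= mu * d (p i) (p j).

Lemma path_index_gap a b :
  a <= n -> b <= n -> (b - a) + (a - b) <= mu * d (p a) (p b).
Proof.
move=> ha hb; case: (leqP a b) => hab; first by have := p_quasi hab hb; lia.
by have := p_quasi (ltnW hab) ha; rewrite d_sym; lia.
Qed.

Lemma path_segment_gromov2 w D k a b :
  a <= n -> b <= n -> (b - a) + (a - b) <= 2 ^ k ->
  (forall i, i <= n -> D <= d w (p i)) ->
  2 * D <= gromov2 (p a) (p b) w + 2 * L + 2 * delta * k.
Proof.
move=> ha hb hk far.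
wlog hab : a b ha hb hk / a <= b.
  move=> W; case: (leqP a b) => [|/ltnW] hab; first exact: W.
  by rewrite gromov2C; apply: W => //; lia.
have := @far_path_gromov2 p w L D k a (b - a) ltac:(lia).
rewrite subnKC //; apply=> i *; [apply: p_step | apply: far]; lia.
Qed.

(* If [g j0] is a farthest point of the geodesic from the path, at distance
   [D], then the detour from [g (j0 - 2D)] through the path to [g (j0 + 2D)]
   has length [O(D)] and avoids the [D]-ball around [g j0]; hyperbolicity
   then forces [D = O(log D)]. *)
Lemma morse_max_dist g j0 D :
  geodesic g (p 0) (p n) -> j0 <= d (p 0) (p n) ->
  (forall i, i <= n -> D <= d (g j0) (p i)) ->
  (forall j, j <= d (p 0) (p n) -> exists2 i, i <= n & d (g j) (p i) <= D) ->
  exists k, D <= L + 2 * delta + delta * k /\ 2 ^ k <= (12 * mu + 4) * D + 1.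
Proof.
move=> hg hj0 far near.
have [j1 [a [hj1 ha /andP [far_a gap1]]]] := geodesic_anchor_before hg hj0 far near.
have [j2 [b [/andP [hj2 hj2N] hb /andP [far_b gap2]]]] := geodesic_anchor_after hg hj0 far near.
have [_ _ gd] := hg; set w := g j0.
have dw1 : d w (g j1) = j0 - j1 by rewrite d_sym gd //; lia.
have dw2 : d w (g j2) = j2 - j0 by rewrite gd.
have d12 : d (g j1) (g j2) = j2 - j1 by rewrite gd //; lia.
have dab : d (p a) (p b) <= 6 * D.
  have := d_triangle (p a) (g j1) (p b); have := d_triangle (g j1) (g j2) (p b).
  by rewrite (d_sym (p a) (g j1)) d12; lia.
have gap := path_index_gap ha hb.
set M := d (g j1) (p a) + d (g j2) (p b) + ((b - a) + (a - b)).
have hM : M <= (6 * mu + 2) * D by have := leq_mul (leqnn mu) dab; lia.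
have [k /andP [hk1 hk2]] := pow2_bracket M.
have [c1 hc1] := d_geodesic (g j1) (p a).
have [c2 hc2] := d_geodesic (g j2) (p b).
have P1 : 2 * D <= gromov2 (g j1) (p a) w + 2 + 2 * delta * k.
  by apply: far_geodesic_gromov2 hc1 _ _; lia.
have P2 := @path_segment_gromov2 w D k a b ha hb ltac:(lia) far.
have P3 : 2 * D <= gromov2 (p b) (g j2) w + 2 + 2 * delta * k.
  by rewrite gromov2C; apply: far_geodesic_gromov2 hc2 _ _; lia.
have := @gromov2_min3 (g j1) (p a) (p b) (g j2) w
  (2 * D - (2 * L + 2 * delta * k)) ltac:(lia) ltac:(lia) ltac:(lia).
have -> : gromov2 (g j1) (g j2) w = 0 by rewrite /gromov2 dw1 dw2 d12; lia.
by move=> h; exists k; split; lia.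
Qed.

End MorsePath.

Lemma morse L mu : 0 < L -> exists Dm, forall (p : nat -> T) n g,
  (forall i, i < n -> d (p i) (p i.+1) <= L) ->
  (forall i j, i <= j -> j <= n -> j - i <= mu * d (p i) (p j)) ->
  geodesic g (p 0) (p n) ->
  forall j, j <= d (p 0) (p n) -> exists2 i, i <= n & d (g j) (p i) <= Dm.
Proof.
move=> L_gt0.
exists (L + 2 * delta + delta * ((12 * mu + 4) * (L + 2 * delta + delta) + 17)).
move=> p n g step quasi hg j hj.
have [near near_min] := choice _ (fun j => nat_argmin (fun i => d (g j) (p i)) n).
have [j0 [hj0 jmax]] := nat_argmax (fun j => d (g j) (p (near j))) (d (p 0) (p n)).
have [k [hD hk]] := @morse_max_dist L mu p n L_gt0 step quasi g j0 _ hg hj0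
  (near_min j0).2 (fun j hj => ex_intro2 _ _ (near j) (near_min j).1 (jmax j hj)).
exists (near j); first exact: (near_min j).1.
exact: leq_trans (jmax j hj) (linear_log_bound hD hk).
Qed.

End HyperbolicMetric.

Local Open Scope group_scope.

(* [invgM] is stated for star monoids; the terms it produces are not matched
   by later rewrites with group lemmas such as [mulgVK]. *)
Lemma invMg (G : groupType) (x y : G) : (x * y)^-1 = y^-1 * x^-1.
Proof. exact: invgM. Qed.

Section WordMetric.

Variables (G : groupType) (S : seq G).

Lemma word_length_uniq g m n : word_length S g m -> word_length S g n -> m = n.
Proof.
move=> [[v [Sv [sv pv]]] min_m] [[w [Sw [sw pw]]] min_n].
by have := min_m w Sw pw; have := min_n v Sv pv; lia.
Qed.

Lemma cayley_dist_ex :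
  (forall g : G, exists w : seq G, all (fun s => s \in S) w /\ \prod_(s <- w) s = g) ->
  exists d : G -> G -> nat, forall a b, cayley_dist S a b (d a b).
Proof.
move=> gen.
have len g : exists n, word_length S g n.
  pose P n := exists w : seq G, all (fun s => s \in S) w /\ size w = n /\ \prod_(s <- w) s = g.
  have [w [Sw pw]] := gen g.
  have [n [[Pn n_min] _]] := @dec_inh_nat_subset_has_unique_least_element P
    (fun n => classic (P n)) (ex_intro P (size w) (ex_intro _ w (conj Sw (conj erefl pw)))).
  exists n; split=> [|v Sv pv]; first exact: Pn.
  by apply/ssrnat.leP/n_min; exists v.
have [l hl] := choice _ len.
by exists (fun a b => l (a^-1 * b)) => a b; apply: hl.
Qed.

Variable d : G -> G -> nat.
Hypothesis dE : forall a b, cayley_dist S a b (d a b).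

Lemma wdistE a b : d a b = d 1 (a^-1 * b).
Proof.
apply: (word_length_uniq (dE a b)).
by have := dE 1 (a^-1 * b); rewrite /cayley_dist invg1 mul1g.
Qed.

Lemma wdist_translate x a b : d (x * a) (x * b) = d a b.
Proof. by rewrite wdistE [RHS]wdistE invMg -mulgA mulKg. Qed.

Lemma wdist_word g :
  exists w, [/\ all (fun s => s \in S) w, size w = d 1 g & \prod_(s <- w) s = g].
Proof. by have [[w [Sw [sw pw]]] _] := dE 1 g; exists w; rewrite pw invg1 mul1g. Qed.

Lemma wdist_le_size w : all (fun s => s \in S) w -> d 1 (\prod_(s <- w) s) <= size w.
Proof. by move=> Sw; have [_] := dE 1 (\prod_(s <- w) s); apply; rewrite // invg1 mul1g. Qed.

Lemma wdist_refl a : d a a = 0.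
Proof.
rewrite wdistE mulVg; apply/eqP; rewrite -leqn0.
by have := @wdist_le_size [::] isT; rewrite big_nil.
Qed.

Lemma wdist_triangle a b c : d a c <= d a b + d b c.
Proof.
rewrite (wdistE a b) (wdistE b c) (wdistE a c).
have [v [Sv sv pv]] := wdist_word (a^-1 * b).
have [w [Sw sw pw]] := wdist_word (b^-1 * c).
have := @wdist_le_size (v ++ w); rewrite all_cat Sv Sw big_cat /= pv pw size_cat sv sw.
by rewrite mulgA mulgK; apply.
Qed.

Lemma wdist_take_step (A : Type) (f : A -> G) L (w : seq A) x i :
  (forall a, d 1 (f a) <= L) -> i < size w ->
  d (x * \prod_(a <- take i w) f a) (x * \prod_(a <- take i.+1 w) f a) <= L.
Proof.
case: w => [//|a0 w] hL hi; rewrite (take_nth a0 hi) -cats1 big_cat big_seq1 /=.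
by rewrite wdistE [x * (_ * _)]mulgA mulKg.
Qed.

Lemma subadditive_le_wdist (f : G -> nat) :
  f 1 = 0 -> (forall x y, f (x * y) <= f x + f y) ->
  exists K, forall g, f g <= (d 1 g * K)%N.
Proof.
move=> f1 f_sub; set K := \max_(s <- S) f s; exists K => g.
have [w [Sw <- <-]] := wdist_word g.
elim: w Sw => [|s w IH] /=; first by rewrite big_nil f1.
case/andP=> Ss Sw; rewrite big_cons mulSn.
apply: leq_trans (f_sub _ _) (leq_add _ (IH Sw)).
exact: (@leq_bigmax_seq _ S xpredT f s Ss isT).
Qed.

Lemma wdist_four_point delta : four_point S delta ->
  forall x y z u, (d x y + d z u <= maxn (d x z + d y u) (d x u + d y z) + 2 * delta)%N.
Proof. by move=> fp x y z u; apply: fp. Qed.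

Lemma wdist_geodesic x y : exists g, geodesic d g x y.
Proof.
have [w [Sw sw pw]] := wdist_word (x^-1 * y); rewrite -wdistE in sw.
pose g i := x * \prod_(s <- take i w) s.
have g_start : g 0 = x by rewrite /g take0 big_nil mulg1.
have g_end : g (d x y) = y by rewrite /g -sw take_size pw mulVKg.
have g_le i j : i <= j -> d (g i) (g j) <= j - i.
  move=> ij; rewrite /g wdist_translate wdistE -(subnKC ij) takeD big_cat /= mulKg.
  apply: leq_trans (wdist_le_size _) _; last by rewrite size_take; case: ifP; lia.
  by apply/allP => s /mem_take /mem_drop /(allP Sw).
exists g; split=> // i j ij jN; apply/eqP; rewrite eqn_leq g_le //=.
have := wdist_triangle x (g i) y; have := wdist_triangle (g i) (g j) y.
have := g_le 0 i isT; have := g_le j (d x y) jN.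
rewrite g_start g_end; lia.
Qed.

Hypothesis S_sym : forall s, s \in S -> s^-1 \in S.

Lemma wdist_sym a b : d a b = d b a.
Proof.
suff le x y : d x y <= d y x by apply/eqP; rewrite eqn_leq !le.
rewrite (wdistE x) (wdistE y); have [w [Sw sw pw]] := wdist_word (y^-1 * x).
have := @wdist_le_size [seq s^-1 | s <- rev w].
rewrite big_map size_map size_rev sw prodgV revK pw invMg invgK; apply.
by rewrite all_map all_rev; apply/allP => s /(allP Sw) /S_sym.
Qed.

End WordMetric.

Lemma wdist_le_mul (G : groupType) (S S' : seq G) (d d' : G -> G -> nat) K :
  (forall a b, cayley_dist S a b (d a b)) -> (forall a b, cayley_dist S' a b (d' a b)) ->
  (forall s, s \in S' -> d 1 s <= K) -> forall a b, d a b <= (K * d' a b)%N.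
Proof.
move=> dE d'E hK a b; rewrite (wdistE dE) (wdistE d'E).
have [w [S'w <- <-]] := wdist_word d'E (a^-1 * b).
elim: w S'w => [|s w IH] /=; first by rewrite big_nil (wdist_refl dE).
case/andP=> S's S'w; rewrite big_cons mulnS.
apply: leq_trans (wdist_triangle dE 1 s _) _; rewrite [d s _](wdistE dE) mulKg.
exact: leq_add (hK s S's) (IH S'w).
Qed.

(* Group expressions reach [mulg] through several canonical-structure paths,
   so one value [f a b] may occur in syntactically different, convertible
   forms; [lia] would treat these as distinct atoms, [set] unifies them. *)
Ltac lia_conv f :=
  repeat match goal with |- context [f ?a ?b] =>
    let z := fresh "z" in set z := f a b; clearbody z end;
  lia.

Section NormalizedCocycle.

Variables (G : groupType) (c : G -> G -> nat).
Hypothesis c_cocycle : forall x y z, c x y + c (x * y) z = c y z + c x (y * z).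
Hypothesis c_11 : c 1 1 = 0.

Lemma cocycle1x x : c 1 x = 0.
Proof. by have := c_cocycle 1 1 x; rewrite !mul1g c_11; lia_conv c. Qed.

Lemma cocyclex1 x : c x 1 = 0.
Proof. by have := c_cocycle x 1 1; rewrite !mulg1 c_11; lia_conv c. Qed.

Lemma cocycle_le_diagr x s : c x s <= c s s^-1.
Proof. by have := c_cocycle x s s^-1; rewrite mulgV cocyclex1; lia_conv c. Qed.

Lemma cocycle_diagV s : c s^-1 s = c s s^-1.
Proof. by have := c_cocycle s s^-1 s; rewrite mulgV mulVg cocycle1x cocyclex1; lia_conv c. Qed.

Lemma cocycle_inv_pair g h :
  c h^-1 g^-1 + c (g * h) (g * h)^-1 + c g h = c g g^-1 + c h h^-1.
Proof.
have := c_cocycle g h h^-1; have := c_cocycle (g * h) h^-1 g^-1.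
by rewrite mulgV cocyclex1 mulgK -invMg; lia_conv c.
Qed.

Lemma cocycle_diag_subadd x y : c (x * y) (x * y)^-1 <= c x x^-1 + c y y^-1.
Proof. by have := cocycle_inv_pair x y; lia_conv c. Qed.

Lemma cocycle_split_inv_le a b b' :
  c (a * b)^-1 b'^-1 <= c b' a + (2 * c (b' * a) (b' * a)^-1)%N.
Proof.
have h1 := c_cocycle b^-1 a^-1 b'^-1; rewrite -invMg -(invMg b' a) in h1.
have h2 := c_cocycle (b' * a)^-1 b' b'^-1.
have e : (b' * a)^-1 * b' = a^-1 by rewrite invMg mulgVK.
rewrite e mulgV cocyclex1 in h2.
have h3 := c_cocycle b' b'^-1 (b' * a); rewrite mulgV cocycle1x mulKg in h3.
have h4 := cocycle_le_diagr b'^-1 (b' * a).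
have h5 := cocycle_le_diagr b^-1 (b' * a)^-1; rewrite invgK cocycle_diagV in h5.
by move: h1 h2 h3 h4 h5; lia_conv c.
Qed.

Lemma cocycle_zero_split_le_diag a b x :
  c a b = 0 -> c (a * b * x) x^-1 <= c (b * x) (b * x)^-1.
Proof.
move=> cab; have := c_cocycle (a * (b * x)) (b * x)^-1 b.
have -> : (b * x)^-1 * b = x^-1 by rewrite invMg mulgVK.
rewrite mulgK cab -mulgA.
by have := cocycle_le_diagr (a * (b * x)) (b * x)^-1; rewrite invgK cocycle_diagV; lia_conv c.
Qed.

Lemma cocycle_split_triangle a1 b1 a2 b2 a3 b3 :
  c a1 b1 = 0 -> c a2 b2 = 0 -> c a3 b3 = 0 ->
  a3 * b3 = (a1 * b1 * (a2 * b2))^-1 ->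
  c (a2 * b2)^-1 (a1 * b1)^-1 <=
    c (a1 * b1) (a2 * b2) + (2 * c (b1 * a2) (b1 * a2)^-1)%N + c (b3 * a1) (b3 * a1)^-1.
Proof.
move=> c1 c2 c3 e3.
have mid : c b1 a2 <= c (a1 * b1) (a2 * b2).
  by have := c_cocycle (a1 * b1) a2 b2; have := c_cocycle a1 b1 a2; rewrite c1 c2; lia_conv c.
have e : (a2 * b2)^-1 * b1^-1 = a3 * b3 * a1 by rewrite e3 !invMg !mulgA mulgVK.
have h := c_cocycle (a2 * b2)^-1 b1^-1 a1^-1; rewrite e -invMg in h.
have := cocycle_zero_split_le_diag a1 c3; have := cocycle_split_inv_le a2 b2 b1.
by move: h mid; lia_conv c.
Qed.

End NormalizedCocycle.

Section CentralExtension.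

Variables (E G : groupType) (iota : int -> E) (pi : E -> G).
Hypothesis ext : central_extension iota pi.

Lemma iotaD a b : iota (a + b)%R = iota a * iota b.
Proof. by case: ext. Qed.

Lemma iota_inj : injective iota.
Proof. by case: ext => _ []. Qed.

Lemma iota_central a e : iota a * e = e * iota a.
Proof. by case: ext => _ [_ []]. Qed.

Lemma piM e f : pi (e * f) = pi e * pi f.
Proof. by case: ext => _ [_ [_ []]]. Qed.

Lemma pi_surj g : exists e, pi e = g.
Proof. by case: ext => _ [_ [_ [_ []]]]. Qed.

Lemma iota0 : iota 0 = 1.
Proof. by apply: (mulIg (iota 0)); rewrite -iotaD addr0 mul1g. Qed.

Lemma iotaN a : iota (- a)%R = (iota a)^-1.
Proof. by apply: (mulIg (iota a)); rewrite -iotaD addNr iota0 mulVg. Qed.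

Lemma mul_iota u v a b : u * iota a * (v * iota b) = u * v * iota (a + b)%R.
Proof. by rewrite iotaD !mulgA; congr (_ * _); rewrite -!mulgA iota_central. Qed.

Lemma iota_quot u a b : (u * iota a)^-1 * (u * iota b) = iota (b - a)%R.
Proof. by rewrite invMg -iotaN -mulgA mulKg -iotaD addrC. Qed.

Lemma pi1 : pi 1 = 1.
Proof. by apply: (mulIg (pi 1)); rewrite -piM !mul1g. Qed.

Lemma pi_prod (A : Type) (f : A -> E) (w : seq A) :
  pi (\prod_(a <- w) f a) = \prod_(a <- w) pi (f a).
Proof. exact: (big_morph pi piM pi1). Qed.

Lemma fibre_le_nat a b : fibre_le iota a b -> exists n : nat, b = a * iota n.
Proof.
case=> n [+ e]; case: n e => // n e _; exists n.
by rewrite -iota_central -e mulgVK.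
Qed.

Section Rho.

Variables (X : Type) (ev : X -> E) (C : nat) (rho : G -> E).
Hypothesis rho_max : forall g, is_rho ev iota pi C g (rho g).

Lemma word_eval_cat w1 w2 : word_eval ev (w1 ++ w2) = word_eval ev w1 * word_eval ev w2.
Proof. exact: big_cat. Qed.

Lemma weighted_cat w1 w2 :
  weighted ev iota C (w1 ++ w2) = weighted ev iota C w1 * weighted ev iota C w2.
Proof.
by rewrite /weighted word_eval_cat size_cat mulnDr PoszD opprD mul_iota.
Qed.

Lemma weighted_nil : weighted ev iota C [::] = 1.
Proof. by rewrite /weighted /word_eval big_nil mul1g muln0 oppr0 iota0. Qed.

Lemma rho_cocycle_ex :
  exists c : G -> G -> nat, forall x y, rho (x * y) = rho x * rho y * iota (c x y).
Proof.
have ex (xy : G * G) : exists n : nat, rho (xy.1 * xy.2) = rho xy.1 * rho xy.2 * iota n.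
  have [[wx [px <-]] _] := rho_max xy.1; have [[wy [py <-]] _] := rho_max xy.2.
  have [_ le] := rho_max (xy.1 * xy.2).
  by apply: fibre_le_nat; rewrite -weighted_cat; apply: le; rewrite word_eval_cat piM px py.
have [c hc] := choice _ ex.
by exists (fun x y => c (x, y)) => x y; exact: (hc (x, y)).
Qed.

Variable c : G -> G -> nat.
Hypothesis rho_mul : forall x y, rho (x * y) = rho x * rho y * iota (c x y).

Lemma rho_cocycle x y z : c x y + c (x * y) z = c y z + c x (y * z).
Proof.
have e1 : rho (x * y * z) = rho x * rho y * rho z * iota (c x y + c (x * y) z)%N.
  by rewrite rho_mul rho_mul PoszD -mul_iota !mulgA.
have e2 : rho (x * (y * z)) = rho x * rho y * rho z * iota (c y z + c x (y * z))%N.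
  by rewrite rho_mul rho_mul PoszD iotaD !mulgA.
move: e2; rewrite [x * (y * z)]mulgA e1 => /mulgI /iota_inj /eqP.
by rewrite eqz_nat => /eqP.
Qed.

Lemma rho1 : rho 1 = 1.
Proof.
have [_ le] := rho_max 1.
have nil1 : pi (word_eval ev [::]) = 1 by rewrite /word_eval big_nil pi1.
have [n] := fibre_le_nat (le [::] nil1).
rewrite weighted_nil mul1g => e1.
have := rho_mul 1 1; rewrite mulg1 e1 -!iotaD => /iota_inj h.
have n0 : n = 0 by lia.
by rewrite n0 iota0.
Qed.

Lemma rho_mul_11 : c 1 1 = 0.
Proof.
have := rho_mul 1 1; rewrite mulg1 rho1 !mul1g -iota0 => /iota_inj /eqP.
by rewrite eqz_nat => /eqP.
Qed.

Lemma rhoV x : (rho x^-1)^-1 = rho x * iota (c x x^-1).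
Proof.
have := rho_mul x x^-1; rewrite mulgV rho1 -mulgA => /esym /mulg1_eq h.
by apply: mulg1_eq; rewrite -iota_central mulgA -h mulVg.
Qed.

Lemma rho_word_split w g i :
  pi (word_eval ev w) = g -> weighted ev iota C w = rho g ->
  pi (word_eval ev (take i w)) * pi (word_eval ev (drop i w)) = g /\
  c (pi (word_eval ev (take i w))) (pi (word_eval ev (drop i w))) = 0.
Proof.
move=> pw ew.
have ab : pi (word_eval ev (take i w)) * pi (word_eval ev (drop i w)) = g.
  by rewrite -piM -word_eval_cat cat_take_drop.
split=> //; set a := pi _ in ab *; set b := pi _ in ab *.
have [_ le_a] := rho_max a; have [_ le_b] := rho_max b.
have [n1 e1] := fibre_le_nat (le_a (take i w) erefl).
have [n2 e2] := fibre_le_nat (le_b (drop i w) erefl).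
have := rho_mul a b; rewrite ab -ew -{1}(cat_take_drop i w) weighted_cat e1 e2 mul_iota.
rewrite -[_ * iota _ * iota _]mulgA -iotaD -[LHS]mulg1 -iota0 => /mulgI /iota_inj.
lia.
Qed.

Lemma average_rhoE x q :
  EQ_average iota (EinEQ (rho x)) (EinEQ ((rho x^-1)^-1)) q ->
  exists k : int, q.1 = rho x * iota k /\ q.2 = ((c x x^-1)%:R / 2 - k%:~R)%R.
Proof.
case=> r [[n1 [e1 f1]] [n2 [e2 f2]]].
move: e1 f1 e2 f2; rewrite /= invg1 mul1g invgK mulg1 => e1 f1 e2 f2.
have hn1 : n1 = (- (c x x^-1)%:Z)%R.
  apply: iota_inj; rewrite -e1 iotaN.
  have := rho_mul x x^-1; rewrite mulgV rho1 => /esym /(canRL (mulgK _)).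
  by rewrite mul1g.
have hq1 : q.1 = (rho x^-1)^-1 * (iota n2)^-1 by rewrite -e2 invMg !invgK mulKg.
exists ((c x x^-1)%:Z - n2)%R; split; first by rewrite hq1 rhoV -iotaN -mulgA -iotaD.
by move: f1 f2; rewrite hn1 intrN intrB pmulrn; lra.
Qed.

Lemma tau_formula g h qg qh qgh t :
  EQ_average iota (EinEQ (rho g)) (EinEQ ((rho g^-1)^-1)) qg ->
  EQ_average iota (EinEQ (rho h)) (EinEQ ((rho h^-1)^-1)) qh ->
  EQ_average iota (EinEQ (rho (g * h))) (EinEQ ((rho (g * h)^-1)^-1)) qgh ->
  EQ_eq iota (iotaQ E t) (EQ_mul (EQ_mul (EQ_inv qgh) qg) qh) ->
  t = (((c h^-1 g^-1)%:R - (c g h)%:R) / 2)%R.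
Proof.
move=> /average_rhoE [k1 [q1g q2g]] /average_rhoE [k2 [q1h q2h]].
move=> /average_rhoE [k3 [q1gh q2gh]] [n []].
rewrite /= invg1 mul1g q1g q1h q1gh -mulgA mul_iota rho_mul -mulgA -iotaD iota_quot.
move=> /iota_inj en ft.
have := cocycle_inv_pair rho_cocycle rho_mul_11 g h.
move/(congr1 (fun m : nat => m%:R : rat)); rewrite !natrD => inv_pair.
have := congr1 (fun m : int => m%:~R : rat) en; rewrite /= !(intrD, intrN, pmulrn) => {}en.
by move: ft q2g q2h q2gh; rewrite ?pmulrn; lra.
Qed.

End Rho.

End CentralExtension.

Section HyperbolicCocycle.

Variables (G : groupType) (S : seq G) (d : G -> G -> nat) (delta : nat).
Hypothesis dE : forall a b, cayley_dist S a b (d a b).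
Hypothesis S_sym : forall s, s \in S -> s^-1 \in S.
Hypothesis S_hyp : four_point S delta.

Variables (c : G -> G -> nat) (Dm K : nat).
Hypothesis c_cocycle : forall x y z, c x y + c (x * y) z = c y z + c x (y * z).
Hypothesis c_11 : c 1 1 = 0.
Hypothesis near_split : forall g x y (gam : nat -> G) j,
  x * g = y -> geodesic d gam x y -> j <= d x y ->
  exists a b, [/\ a * b = g, c a b = 0 & d (gam j) (x * a) <= Dm].
Hypothesis diag_ball : forall s, d 1 s <= (Dm + (4 * delta + 1) + Dm)%N -> c s s^-1 <= K.

Lemma cocycle_inv_le g h : c h^-1 g^-1 <= c g h + (3 * K)%N.
Proof.
have d_sym := wdist_sym dE S_sym; have d_tri := wdist_triangle dE.
have [g1 hg1] := wdist_geodesic dE 1 g.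
have [g2 hg2] := wdist_geodesic dE g (g * h).
have [g3 hg3] := wdist_geodesic dE (g * h) 1.
have [j1 [j2 [j3 [hj1 hj2 hj3 thin12 thin31]]]] :=
  geodesic_triangle_thin d_sym d_tri (wdist_four_point dE S_hyp) hg1 hg2 hg3.
have [a1 [b1 [ab1 z1]]] := near_split (mul1g g) hg1 hj1; rewrite mul1g => near1.
have [a2 [b2 [ab2 z2 near2]]] := near_split erefl hg2 hj2.
have [a3 [b3 [ab3 z3 near3]]] := near_split (mulgV (g * h)) hg3 hj3.
have ball12 : d 1 (b1 * a2) <= (Dm + (4 * delta + 1) + Dm)%N.
  have -> : b1 * a2 = a1^-1 * (g * a2) by rewrite -ab1 -mulgA mulKg.
  rewrite -(wdistE dE); have := d_tri a1 (g1 j1) (g * a2).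
  have := d_tri (g1 j1) (g2 j2) (g * a2); rewrite (d_sym a1 (g1 j1)).
  by move: near1 near2 thin12; lia_conv d.
have ball31 : d 1 (b3 * a1) <= (Dm + (4 * delta + 1) + Dm)%N.
  have -> : b3 * a1 = (g * h * a3)^-1 * a1 by rewrite invMg -ab3 mulKg.
  rewrite -(wdistE dE); have := d_tri (g * h * a3) (g3 j3) a1.
  have := d_tri (g3 j3) (g1 j1) a1; rewrite (d_sym (g * h * a3) (g3 j3)).
  by move: near1 near3 thin31; lia_conv d.
have := cocycle_split_triangle c_cocycle c_11 z1 z2 z3 (etrans ab3 _).
rewrite ab1 ab2 => /(_ erefl).
by have := diag_ball ball12; have := diag_ball ball31; lia_conv c.
Qed.

End HyperbolicCocycle.

Section RhoNearGeodesics.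

Variables (E G : groupType) (iota : int -> E) (pi : E -> G).
Variables (X : finType) (ev : X -> E) (C : nat) (rho : G -> E) (c : G -> G -> nat).
Hypothesis ext : central_extension iota pi.
Hypothesis ev_gen : forall e : E, exists w : seq X, word_eval ev w = e.
Hypothesis rho_max : forall g, is_rho ev iota pi C g (rho g).
Hypothesis rho_mul : forall x y, rho (x * y) = rho x * rho y * iota (c x y).
Variable lam : rat.
Hypothesis rho_quasi : forall g w, pi (word_eval ev w) = g ->
  weighted ev iota C w = rho g -> quasigeodesic ev pi lam w.
Variables (S : seq G) (d : G -> G -> nat) (delta : nat).
Hypothesis dE : forall a b, cayley_dist S a b (d a b).
Hypothesis S_sym : forall s, s \in S -> s^-1 \in S.
Hypothesis S_hyp : four_point S delta.

Lemma ev_image_generates (g : G) : exists w : seq G,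
  all (fun s => s \in [seq pi (ev x) | x <- enum X]) w /\ \prod_(s <- w) s = g.
Proof.
have [e <-] := pi_surj ext g; have [w <-] := ev_gen e.
exists [seq pi (ev x) | x <- w]; split; last by rewrite big_map /word_eval (pi_prod ext).
by apply/allP => s /mapP [x _ ->]; rewrite map_f ?mem_enum.
Qed.

(* The Morse lemma applies to the paths of maximizing words, which are
   quasigeodesic for the word metric of [pi (ev X)], hence for [d]. *)
Lemma rho_near_geodesics : exists Dm, forall g x y (gam : nat -> G) j,
  x * g = y -> geodesic d gam x y -> j <= d x y ->
  exists a b, [/\ a * b = g, c a b = 0 & d (gam j) (x * a) <= Dm].
Proof.
have [dX dXE] := cayley_dist_ex ev_image_generates.
set L1 := \max_(s <- S) dX 1%g s.
have dX_le a b : dX a b <= (L1 * d a b)%N.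
  apply: wdist_le_mul dXE dE _ a b => s Ss.
  exact: (@leq_bigmax_seq _ S xpredT (dX 1%g) s Ss isT).
set L2 := \max_(x : X) d 1%g (pi (ev x)).
have [mu lam_mu] : exists mu : nat, (lam <= mu%:R)%R.
  exists (Num.bound `|lam|); apply: le_trans (ler_norm lam) (ltW _).
  exact/archi_boundP/normr_ge0.
have [Dm morse_Dm] := morse (wdist_refl dE) (wdist_sym dE S_sym) (wdist_triangle dE)
  (wdist_four_point dE S_hyp) (wdist_geodesic dE) (mu * L1)%N (ltn0Sn L2).
exists Dm => g x y gam j xg geo_gam hj.
have [[w [pw ew]] _] := rho_max g.
pose p i := x * pi (word_eval ev (take i w)).
have p_step i : i < size w -> d (p i) (p i.+1) <= L2.+1.
  move=> hi; rewrite /p /word_eval !(pi_prod ext); apply/leqW/(wdist_take_step dE) => // a.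
  exact: (@leq_bigmax _ (fun x => d 1%g (pi (ev x))) a).
have p_quasi i k : i <= k -> k <= size w -> k - i <= (mu * L1 * d (p i) (p k))%N.
  move=> ik kw; have [q _] := rho_quasi pw ew ik kw (dXE _ _).
  rewrite /p (wdist_translate dE) -mulnA; apply: leq_trans (leq_mul (leqnn mu) (dX_le _ _)).
  rewrite -(ler_nat rat) natrM; apply: le_trans q _.
  by apply: ler_wpM2r => //; exact: ler0n.
have p0 : p 0 = x by rewrite /p take0 /word_eval big_nil (pi1 ext) mulg1.
have pN : p (size w) = y by rewrite /p take_size pw.
have := morse_Dm p (size w) gam p_step p_quasi; rewrite p0 pN.
case/(_ geo_gam j hj) => i hi near.
have [ab zab] := rho_word_split ext rho_max rho_mul i pw ew.
by exists (pi (word_eval ev (take i w))), (pi (word_eval ev (drop i w))).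
Qed.

End RhoNearGeodesics.

Theorem proposition3p4
  (E G : groupType) (iota : int -> E) (pi : E -> G)
  (X : finType) (ev : X -> E) (C : nat) (rho : G -> E) :
  word_hyperbolic G ->
  central_extension iota pi ->
  (* ev(X) is a symmetric generating set of E *)
  (forall x : X, exists y : X, ev y = (ev x)^-1) ->
  (forall e : E, exists w : seq X, word_eval ev w = e) ->
  (0 < C)%N ->
  (* rho g is the maximum, which exists for every g *)
  (forall g : G, is_rho ev iota pi C g (rho g)) ->
  (exists lambda : rat, (0 < lambda)%R /\
     forall (g : G) (w : seq X), pi (word_eval ev w) = g ->
       weighted ev iota C w = rho g -> quasigeodesic ev pi lambda w) ->
  exists M : rat, forall (g h : G) (qg qh qgh : E * rat) (t : rat),
    EQ_average iota (EinEQ (rho g)) (EinEQ ((rho g^-1)^-1)) qg ->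
    EQ_average iota (EinEQ (rho h)) (EinEQ ((rho h^-1)^-1)) qh ->
    EQ_average iota (EinEQ (rho (g * h))) (EinEQ ((rho (g * h)^-1)^-1)) qgh ->
    EQ_eq iota (iotaQ E t) (EQ_mul (EQ_mul (EQ_inv qgh) qg) qh) ->
    (`|t| <= M)%R.
Proof.
move=> [S [[S_sym S_gen] [delta S_hyp]]] ext _ ev_gen _ rho_max [lam [_ rho_quasi]].
have [c rho_mul] := rho_cocycle_ex ext rho_max.
have c_cocycle := rho_cocycle ext rho_mul.
have c_11 := rho_mul_11 ext rho_max rho_mul.
have [d dE] := cayley_dist_ex S_gen.
have [Dm near_split] := rho_near_geodesics ext ev_gen rho_max rho_mul rho_quasi dE S_sym S_hyp.
have diag1 : c 1 1^-1 = 0 by rewrite invg1.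
have [K diag_le] := subadditive_le_wdist dE diag1 (cocycle_diag_subadd c_cocycle c_11).
set R := (Dm + (4 * delta + 1) + Dm)%N.
have diag_ball s : d 1 s <= R -> c s s^-1 <= (R * K)%N.
  by move=> hs; apply: leq_trans (diag_le s) _; rewrite leq_mul2r hs orbT.
have inv_le := cocycle_inv_le dE S_sym S_hyp c_cocycle c_11 near_split diag_ball.
exists ((3 * (R * K))%N%:R)%R => g h qg qh qgh t avg_g avg_h avg_gh tau.
rewrite (tau_formula ext rho_max rho_mul avg_g avg_h avg_gh tau).
have := inv_le g h; have := inv_le h^-1 g^-1; rewrite !invgK -!(ler_nat rat) !natrD.
by rewrite ?pmulrn => ? ?; rewrite ler_norml; apply/andP; split; lra.
Qed.
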